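(* Let $(X,d)$ be a metric space, $K\subseteq X$ compact and let $\varepsilon>0$. Then \[ M_{\omega}(K,\varepsilon)\le M^{*}(K,\varepsilon)\le N^{*}(K,\varepsilon)\le N_{\omega}(K,\varepsilon). \]
   Context: $X$ carries the metric topology; $B(x,\varepsilon)=\{y\in X:d(x,y)\le\varepsilon\}$ and $\mathbbm{1}_A$ is the indicator of $A$. $\mathcal{D}_+(X)$ denotes the non-negative finite discrete measures on $X$ (finite sums $\sum_i\omega_i\delta_{x_i}$, $\omega_i\ge0$) and $\mathcal{B}_+(X)$ the non-negative Borel measures on $X$. Define $N_\omega(K,\varepsilon)=\inf\{\nu(X):\nu\in\mathcal{D}_+(X),\ \int\mathbbm{1}_{B(y,\varepsilon)}(x)\,d\nu(y)\ge\mathbbm{1}_K(x)\ \forall x\in X\}$; $N^{*}(K,\varepsilon)$ the same infimum over $\mu\in\mathcal{B}_+(X)$; $M_\omega(K,\varepsilon)=\sup\{\rho(K):\rho\in\mathcal{D}_+(X),\ \int\mathbbm{1}_{B(y,\varepsilon)}(x)\,d\rho(y)\le1\ \forall x\in X\}$; $M^{*}(K,\varepsilon)$ the same supremum over $\rho\in\mathcal{B}_+(X)$. *)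

From HB Require Import structures.
From mathcomp Require Import all_boot all_order all_algebra.
From mathcomp Require Import all_classical all_reals all_analysis.

Set Implicit Arguments.
Unset Strict Implicit.
Unset Printing Implicit Defensive.

Import Order.TTheory GRing.Theory Num.Theory.
Local Open Scope classical_set_scope.
Local Open Scope ring_scope.

Section Defs.
Variables (R : realType) (X : metricType R).

Definition cball (x : X) (e : R) : set X := [set y | mdist x y <= e].

(* nu = \sum_i w_i \delta_{x_i}, encoded as the list [:: (w_i, x_i)] *)
Definition dmeas := seq (R * X).
Definition dmeas_nonneg (nu : dmeas) : Prop := forall p, p \in nu -> 0 <= p.1.
Definition dmeas_of (nu : dmeas) (A : set X) : R :=
  \sum_(p <- nu) p.1 * \1_A p.2.
Definition dmeas_int_ball (nu : dmeas) (e : R) (x : X) : R :=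
  \sum_(p <- nu) p.1 * \1_(cball p.2 e) x.

Definition N_omega (K : set X) (e : R) : \bar R :=
  ereal_inf [set (dmeas_of nu setT)%:E | nu in
    [set nu : dmeas | dmeas_nonneg nu /\
       forall x : X, dmeas_int_ball nu e x >= \1_K x]].

Definition M_omega (K : set X) (e : R) : \bar R :=
  ereal_sup [set (dmeas_of rho K)%:E | rho in
    [set rho : dmeas | dmeas_nonneg rho /\
       forall x : X, dmeas_int_ball rho e x <= 1]].

(* MathComp-Analysis measurable types must be pointed; we equip a copy of X
   with a chosen point x0 (the sigma-algebra does not depend on it). *)
Definition ptX (x0 : X) : Type := X.
HB.instance Definition _ (x0 : X) := Choice.on (ptX x0).
HB.instance Definition _ (x0 : X) := isPointed.Build (ptX x0) x0.

Definition open_sets (x0 : X) : set (set (ptX x0)) := [set U | open (U : set X)].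

Definition borelX (x0 : X) := g_sigma_algebraType (@open_sets x0).

Definition Nstar_pt (x0 : X) (K : set X) (e : R) : \bar R :=
  ereal_inf [set mu setT | mu in
    [set mu : {measure set (borelX x0) -> \bar R} |
       forall x : X, (\int[mu]_y (\1_(cball y e) x : R)%:E >= (\1_K x)%:E)%E]].

Definition Mstar_pt (x0 : X) (K : set X) (e : R) : \bar R :=
  ereal_sup [set mu (K : set (borelX x0)) | mu in
    [set mu : {measure set (borelX x0) -> \bar R} |
       forall x : X, (\int[mu]_y (\1_(cball y e) x : R)%:E <= 1)%E]].

(* If X is empty the only Borel measure is the zero measure, whence
   N^*(K,e) = inf {0} = 0 and M^*(K,e) = sup {0} = 0. *)
Definition Nstar (K : set X) (e : R) : \bar R :=
  match pselect (exists x : X, True) with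
  | left h => Nstar_pt (projT1 (cid h)) K e
  | right _ => 0%E
  end.

Definition Mstar (K : set X) (e : R) : \bar R :=
  match pselect (exists x : X, True) with
  | left h => Mstar_pt (projT1 (cid h)) K e
  | right _ => 0%E
  end.

End Defs.

From HB Require Import structures.
From mathcomp Require Import all_boot all_order all_algebra.
From mathcomp Require Import all_classical all_reals all_analysis.
From mathcomp Require Import finmap measurable_realfun lra.

(* A finite discrete measure is the Borel measure given by its weighted Dirac
   masses, with the same total mass and the same ball integrals; this gives the
   two outer inequalities.  For the middle one, let mu be an e-packing
   (mu (B(x,e)) <= 1 for all x) and nu an e-covering (nu (B(x,e)) >= 1 on K).
   By Tonelli,
     mu K <= \int_K nu (B(x,e)) dmu(x) = \int mu (K /\ B(y,e)) dnu(y) <= nu X.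
   Compactness makes Tonelli applicable: finitely many e-balls cover K, so mu is
   finite on K, and nu may be assumed finite. *)

Set Implicit Arguments.
Unset Strict Implicit.
Unset Printing Implicit Defensive.

Import Order.TTheory GRing.Theory Num.Theory.
Local Open Scope classical_set_scope.
Local Open Scope ring_scope.

(* [compact_cover] is stated for pointed spaces. *)
Definition pointed_metric (R : realType) (X : metricType R) (x0 : X) : Type :=
  X.
HB.instance Definition _ (R : realType) (X : metricType R) (x0 : X) :=
  Topological.on (pointed_metric x0).
HB.instance Definition _ (R : realType) (X : metricType R) (x0 : X) :=
  isPointed.Build (pointed_metric x0) x0.

Section metric_balls.
Variables (R : realType) (X : metricType R).

Lemma indic_cball_sym (x y : X) (e : R) :
  \1_(cball y e) x = \1_(cball x e) y :> R.
Proof.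
rewrite !indicE; congr ((_ : bool)%:R).
by apply/idP/idP => /set_mem h; apply/mem_set; rewrite /cball /= metric_sym.
Qed.

Lemma mdist_lt_open (q : X) (r : R) : open [set y | mdist q y < r].
Proof.
rewrite openE => y /= qy; apply/nbhs_ballP; exists (r - mdist q y) => /=.
  by rewrite subr_gt0.
move=> z; rewrite ballEmdist /= => yz.
have := metric_triangle q y z; lra.
Qed.

Lemma cball_closed (q : X) (r : R) : closed (cball q r).
Proof.
rewrite -openC openE => y /= /negP; rewrite -ltNge => rqy.
apply/nbhs_ballP; exists (mdist q y - r) => /=; first by rewrite subr_gt0.
move=> z; rewrite ballEmdist /= => yz; apply/negP; rewrite -ltNge.
have := metric_triangle q z y; rewrite [mdist z y]metric_sym; lra.
Qed.

Lemma compact_mdist_net (K : set X) (r : R) : compact K -> 0 < r ->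
  exists F : {fset X}, K `<=` \bigcup_(q in [set` F]) [set y | mdist q y < r].
Proof.
move=> cK r0; have [->|/set0P[k Kk]] := eqVneq K set0; first by exists fset0.
have cKk : @compact (pointed_metric k) K := cK; rewrite compact_cover in cKk.
have [F _ KF] : finite_subset_cover K (fun q => [set y | mdist q y < r]) K.
  apply: cKk => [q _|x Kx]; first exact: mdist_lt_open.
  by exists x => //=; rewrite mdistxx.
by exists F.
Qed.

End metric_balls.

Section borel_sets.
Variables (R : realType) (X : metricType R) (x0 : X).
Local Notation B := (borelX x0).

Lemma open_borel_measurable (A : set X) : open A -> measurable (A : set B).
Proof. by move=> oA; apply: sub_sigma_algebra. Qed.

Lemma closed_borel_measurable (A : set X) : closed A -> measurable (A : set B).
Proof.
by rewrite -openC => /open_borel_measurable/(@measurableC _ B); rewrite setCK.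
Qed.

Lemma measurable_cball (q : X) (r : R) : measurable (cball q r : set B).
Proof. by apply: closed_borel_measurable; exact: cball_closed. Qed.

Lemma compact_borel_measurable (K : set X) :
  compact K -> measurable (K : set B).
Proof.
by move/(compact_closed (@metric_hausdorff R X))/closed_borel_measurable.
Qed.

Definition cball_graph (K : set X) (e : R) : set (B * B) :=
  [set z | K z.1 /\ cball z.2 e z.1].

(* The product of the Borel sigma-algebras can be smaller than the Borel
   sigma-algebra of [X * X]; finite nets of [K] write this closed set with
   countably many open rectangles. *)
Lemma measurable_cball_graph (K : set X) (e : R) : compact K ->
  measurable (cball_graph K e).
Proof.
move=> cK; pose r n : R := n.+1%:R^-1 / 2.
have r_gt0 n : 0 < r n by rewrite divr_gt0 ?invr_gt0 ?ltr0n.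
have /choice[F KF] n := compact_mdist_net cK (r_gt0 n).
suff -> : cball_graph K e = (K `*` setT) `&` \bigcap_n \bigcup_(q in [set` F n])
    ([set y | mdist q y < r n] `*` [set y | mdist q y < e + r n]).
  apply: measurableI.
    by apply: measurableX => //; exact: compact_borel_measurable.
  apply: bigcapT_measurable => n; apply: fin_bigcup_measurable => [|q _].
    exact: finite_fset.
  by apply: measurableX; apply: open_borel_measurable; exact: mdist_lt_open.
apply/seteqP; split => [[x y] /= [Kx dyx]|[x y] /= [[Kx _] near_xy]].
  split; first by [].
  move=> n _; have [q Fq /= dqx] := KF n x Kx.
  exists q => //; split=> //=; move: dyx; rewrite /cball /= metric_sym.
  have := metric_triangle q x y; lra.
split=> //; rewrite /cball /= leNgt; apply/negP => /ltr_add_invr[n].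
have [q _ [/= dqx dqy]] := near_xy n I.
have := metric_triangle y q x; rewrite [mdist y q]metric_sym.
move: dqx dqy; rewrite /r; set t := n.+1%:R^-1; lra.
Qed.

End borel_sets.

Section discrete_measure.
Local Open Scope ereal_scope.
Variables (R : realType) (X : metricType R) (x0 : X).
Local Notation B := (borelX x0).

Lemma integral_indic_cball (mu : {measure set B -> \bar R}) (x : X) (e : R) :
  \int[mu]_y (\1_(cball y e) x)%:E = mu (cball x e).
Proof.
under eq_integral do rewrite indic_cball_sym.
by rewrite integral_indic ?setIT //; exact: measurable_cball.
Qed.

(* Absolute values make the atoms measures without a positivity hypothesis on
   the weights; they are harmless for non-negative [nu]. *)
Definition dmeas_atom (nu : dmeas X) (k : nat) : {measure set B -> \bar R} :=
  let p := nth (0%R, x0) nu k in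
  mscale (NngNum (normr_ge0 p.1)) (@dirac _ B p.2 R).

Definition dmeas_measure (nu : dmeas X) : {measure set B -> \bar R} :=
  msum (dmeas_atom nu) (size nu).

Lemma dmeas_measureE (nu : dmeas X) (A : set B) : dmeas_nonneg nu ->
  dmeas_measure nu A = (dmeas_of nu A)%:E.
Proof.
move=> nu_ge0; rewrite /dmeas_measure /msum /dmeas_of (big_nth (0%R, x0)).
rewrite big_mkord -sumEFin; apply: eq_bigr => i _.
rewrite /dmeas_atom /mscale /= /dirac /mscale /=.
by rewrite ger0_norm // nu_ge0 // mem_nth.
Qed.

Lemma integral_dmeas_measure (nu : dmeas X) (e : R) (x : X) :
  dmeas_nonneg nu ->
  \int[dmeas_measure nu]_y (\1_(cball y e) x)%:E = (dmeas_int_ball nu e x)%:E.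
Proof.
move=> nu_ge0; rewrite integral_indic_cball dmeas_measureE //.
by congr (_%:E); apply: eq_bigr => p _; rewrite indic_cball_sym.
Qed.

End discrete_measure.

Section packing_le_covering.
Local Open Scope ereal_scope.
Variables (R : realType) (X : metricType R) (x0 : X) (K : set X) (e : R).
Hypothesis cK : compact K.
Local Notation B := (borelX x0).

Let mK : measurable (K : set B) := compact_borel_measurable cK.

Lemma packing_compact_lty (mu : {measure set B -> \bar R}) : (0 < e)%R ->
  (forall x, mu (cball x e) <= 1) -> mu K < +oo.
Proof.
move=> e_gt0 mu_pack; have [F KF] := compact_mdist_net cK e_gt0.
have : mu K <= \sum_(q \in [set` F]) mu (cball q e : set B).
  apply: content_sub_fsum => // [q _|x /KF[q Fq dqx]].
    exact: measurable_cball.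
  by exists q => //; exact: ltW.
move/le_lt_trans; apply; rewrite fsbig_finite //=.
by apply: lte_sum_pinfty => q _; exact: le_lt_trans (mu_pack q) (ltry 1).
Qed.

Lemma finite_packing_le_covering (mu nu : {finite_measure set B -> \bar R}) :
  (forall x, mu (cball x e) <= 1) -> (forall x, K x -> 1 <= nu (cball x e)) ->
  mu K <= nu setT.
Proof.
move=> mu_pack nu_cov.
pose f (z : (B * B)%type) : \bar R := (\1_(cball_graph K e) z)%:E.
have mf : measurable_fun setT f.
  by apply/measurable_EFinP/measurable_indic; exact: measurable_cball_graph.
have f_ge0 z : 0 <= f z by rewrite lee_fin.
have f_xsection x : K x -> \int[nu]_y f (x, y) = nu (cball x e).
  move=> Kx; rewrite -integral_indic_cball; apply: eq_integral => y _.
  rewrite /f !indicE; congr ((_ : bool)%:R%:E).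
  by apply/idP/idP => /set_mem; [case=> _|move=> ?]; apply/mem_set.
have f_ysection y : \int[mu]_x f (x, y) = mu (K `&` cball y e).
  rewrite integral_indic ?setIT //.
  by apply: measurableI => //; exact: measurable_cball.
have -> : mu K = \int[mu]_x (\1_K x)%:E by rewrite integral_indic ?setIT.
apply: (@le_trans _ _ (\int[mu]_x \int[nu]_y f (x, y))).
  apply: ge0_le_integral => //.
  - by apply/measurable_EFinP; exact: measurable_indic.
  - exact: measurable_fun_fubini_tonelli_F.
  - move=> x _; have [Kx|nKx] := pselect (K x).
      by rewrite f_xsection // indicE mem_set //; exact: nu_cov.
    by rewrite indicE memNset //; apply: integral_ge0.
rewrite (fubini_tonelli f mf f_ge0) -[nu setT]mul1e -integral_cst //.
apply: ge0_le_integral => //.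
- by move=> y _; apply: integral_ge0.
- exact: measurable_fun_fubini_tonelli_G.
- move=> y _; rewrite f_ysection /cst.
  have mB : measurable (cball y e : set B) by exact: measurable_cball.
  exact: le_trans (measureIr _ mK mB) (mu_pack y).
Qed.

Lemma packing_le_covering (mu nu : {measure set B -> \bar R}) : (0 < e)%R ->
  (forall x, mu (cball x e) <= 1) -> (forall x, K x -> 1 <= nu (cball x e)) ->
  mu K <= nu setT.
Proof.
move=> e_gt0 mu_pack nu_cov.
have [->|nu_fin] := eqVneq (nu setT) +oo; first exact: leey.
have nu_lty : nu setT < +oo by rewrite ltey.
have muK_lty : mu K < +oo by exact: packing_compact_lty.
rewrite -{1}(setIid K) -[setT]setTI.
apply: (finite_packing_le_covering (mu := mfrestr mK muK_lty)
  (nu := mfrestr measurableT nu_lty)) => [x|x Kx].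
  have mB : measurable (cball x e : set B) by exact: measurable_cball.
  exact: le_trans (measureIl _ mB mK) (mu_pack x).
by rewrite [X in _ <= X]/= /mfrestr /mrestr setIT; exact: nu_cov.
Qed.

End packing_le_covering.

Section discrete_vs_borel.
Local Open Scope ereal_scope.
Variables (R : realType) (X : metricType R) (x0 : X) (K : set X) (e : R).

Lemma M_omega_le_Mstar_pt : M_omega K e <= Mstar_pt x0 K e.
Proof.
apply: ge_ereal_sup => _ [rho [rho_ge0 rho_pack] <-].
rewrite -(dmeas_measureE (x0 := x0)) //; apply: ereal_sup_ubound.
exists (dmeas_measure x0 rho) => //.
by move=> x; rewrite integral_dmeas_measure // lee_fin.
Qed.

Lemma Nstar_pt_le_N_omega : Nstar_pt x0 K e <= N_omega K e.
Proof.
apply: le_ereal_inf_tmp => _ [nu [nu_ge0 nu_cov] <-].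
rewrite -(dmeas_measureE (x0 := x0)) //; apply: ereal_inf_lbound.
exists (dmeas_measure x0 nu) => //.
by move=> x; rewrite integral_dmeas_measure // lee_fin.
Qed.

Lemma Mstar_pt_le_Nstar_pt : compact K -> (0 < e)%R ->
  Mstar_pt x0 K e <= Nstar_pt x0 K e.
Proof.
move=> cK e_gt0; apply: ge_ereal_sup => _ [mu mu_pack <-].
apply: le_ereal_inf_tmp => _ [nu nu_cov <-].
apply: (packing_le_covering (e := e)) => // [x|x Kx].
  by rewrite -integral_indic_cball; exact: mu_pack.
by rewrite -integral_indic_cball; have := nu_cov x; rewrite indicE mem_set.
Qed.

End discrete_vs_borel.

Theorem theorem2p12 (R : realType) (X : metricType R) (K : set X) (e : R) :
  compact K -> 0 < e ->
  (M_omega K e <= Mstar K e <= Nstar K e)%E /\ (Nstar K e <= N_omega K e)%E.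
Proof.
move=> cK e_gt0; rewrite /Mstar /Nstar; case: pselect => [inhX|noX].
  split; last exact: Nstar_pt_le_N_omega.
  by rewrite M_omega_le_Mstar_pt Mstar_pt_le_Nstar_pt.
have dmeas_nil (nu : dmeas X) : nu = [::].
  by case: nu => // p nu; case: noX; exists p.2.
split; last first.
  apply: le_ereal_inf_tmp => _ [nu _ <-].
  by rewrite (dmeas_nil nu) /dmeas_of big_nil.
rewrite lexx andbT; apply: ge_ereal_sup => _ [rho _ <-].
by rewrite (dmeas_nil rho) /dmeas_of big_nil.
Qed.
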